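(* Let $r\ge5$. There is a constant $C$ depending only on $r$ such that for every $K_r$-tree $T$ and every $S\subseteq V(T)$, and for any run of the $(r-2)_*$-BP process on $T$ with seed set $S$, we have $|\langle S;T\rangle_*|\le C|S|$.
   Context: A graph $T$ is a $K_r$-tree if it is the union of copies $H_1,\dots,H_\vartheta$ of $K_r$ such that for each $1<i\le\vartheta$, $H_i$ shares exactly one edge with $H_1\cup\cdots\cup H_{i-1}$ (the common vertices being exactly the two endpoints of that edge). An edge of $T$ is internal if it lies in at least two of the $H_i$. The $(r-2)_*$-bootstrap percolation process on $T$ with seed set $S\subseteq V(T)$: initially the vertices of $S$ are infected; in each step, either (usual step) some uninfected vertex with at least $r-2$ infected neighbors in $T$ becomes infected; or else (special step), if no usual step is possible but for some internal edge $f$ there are two copies $H_i\ne H_j$ containing $f$ such that $H_i$ has $r-4$ infected vertices and $H_j$ has $1$ infected vertex, all these $r-3$ vertices not in $f$, then an arbitrarily chosen vertex $u\in f$ becomes infected; otherwise the process terminates. $\langle S;T\rangle_*$ is the set of eventually infected vertices. *)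

From mathcomp Require Import all_boot.
Set Implicit Arguments. Unset Strict Implicit. Unset Printing Implicit Defensive.

(* A K_r-tree is given by the list Hs = [H_1; ...; H_theta] of the vertex sets
   of its copies of K_r, inside an ambient finite type V.  The graph T has
   vertex set the union of the H_i and edge set all pairs {x,y}, x != y,
   lying together in some H_i. *)

Definition copy (V : finType) (Hs : seq {set V}) (i : nat) : {set V} :=
  nth set0 Hs i.

Definition tree_vertices (V : finType) (Hs : seq {set V}) : {set V} :=
  \bigcup_(H <- Hs) H.

Definition tadj (V : finType) (Hs : seq {set V}) (x y : V) : bool :=
  (x != y) && has (fun H : {set V} => (x \in H) && (y \in H)) Hs.

(* H_1 u ... u H_{i} (0-based: copies with index < i) *)
Definition prefix_vertices (V : finType) (Hs : seq {set V}) (i : nat) : {set V} :=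
  \bigcup_(j < i) copy Hs j.

Definition is_Kr_tree (r : nat) (V : finType) (Hs : seq {set V}) : Prop :=
  (forall i, i < size Hs -> #|copy Hs i| = r) /\
  (forall i, 0 < i < size Hs ->
     exists a b : V, [/\ a != b,
       copy Hs i :&: prefix_vertices Hs i = [set a; b] &
       exists2 j, j < i & (a \in copy Hs j) && (b \in copy Hs j)]).

Definition usual_ok (r : nat) (V : finType) (Hs : seq {set V}) (A : {set V}) (u : V) : bool :=
  (u \notin A) && (r - 2 <= #|[set w in A | tadj Hs w u]|).

Definition special_ok (r : nat) (V : finType) (Hs : seq {set V}) (A : {set V}) (u : V) : Prop :=
  exists i j (a b : V),
    [/\ i < size Hs, j < size Hs, i != j, a != b &
    [/\ [&& a \in copy Hs i, b \in copy Hs i, a \in copy Hs j & b \in copy Hs j],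
        u \in [set a; b],
        #|copy Hs i :&: A| = r - 4,
        #|copy Hs j :&: A| = 1 &
        [disjoint (copy Hs i :|: copy Hs j) :&: A & [set a; b]]]].

Definition bp_step (r : nat) (V : finType) (Hs : seq {set V}) (A : {set V}) (u : V) : Prop :=
  usual_ok r Hs A u \/ ((forall w, ~~ usual_ok r Hs A w) /\ special_ok r Hs A u).

(* a (partial) run: the sequence of vertices infected in order *)
Fixpoint valid_run (r : nat) (V : finType) (Hs : seq {set V}) (A : {set V}) (s : seq V) : Prop :=
  match s with
  | [::] => True
  | u :: s' => bp_step r Hs A u /\ valid_run r Hs (u |: A) s'
  end.

Definition terminated (r : nat) (V : finType) (Hs : seq {set V}) (A : {set V}) : Prop :=
  (forall w, ~~ usual_ok r Hs A w) /\ (forall u, ~ special_ok r Hs A u).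

Definition final_set (V : finType) (S : {set V}) (s : seq V) : {set V} :=
  S :|: [set x in s].

From mathcomp Require Import all_boot zify.
Set Implicit Arguments. Unset Strict Implicit. Unset Printing Implicit Defensive.

(* For a set X of vertices let e(X) be the number of edges of T[X], f(X) the
   number of copies H_i contained in X, and t(X) the number of copies whose new
   vertices (those outside H_1 u ... u H_(i-1)) meet X.  Counting copy by copy,
   2 e(X) + 2 t(X) <= (r+1) |X| + 2 f(X) and |X| <= r t(X).
   Along the process 2 e - 2 f grows by at least 2 (r-2) per infected vertex:
   a usual step with k infected neighbours adds 2k to 2 e and completes at most
   k - (r-2) copies; a special step adds at least 2 (r-3) to 2 e, completes no
   copy, and uses up two "charges" of copies touched by the final set X_final,
   each of which carries one charge for holding r-4 infected vertices and one
   for holding a single one (a single charge when r = 5).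
   Comparing both bounds at X_final gives |X_final| <= 8 r |S|. *)

Lemma subset_cardsI (T : finType) (A B : {set T}) : (A \subset B) = (#|A :&: B| == #|A|).
Proof.
apply/idP/eqP => [/setIidPl -> // | e].
by apply/setIidPl/eqP; rewrite eqEcard subsetIl e leqnn.
Qed.

Lemma card_bigcup_le (T I : finType) (P : pred I) (F : I -> {set T}) :
  #|\bigcup_(i | P i) F i| <= \sum_(i | P i) #|F i|.
Proof.
apply: (big_ind2 (fun (A : {set T}) n => #|A| <= n)) => [|A m B n hA hB|//].
  by rewrite cards0.
exact: leq_trans (leq_card_setU A B) (leq_add hA hB).
Qed.

Lemma cardsU_disjoint (T : finType) (A B : {set T}) :
  [disjoint A & B] -> #|A :|: B| = #|A| + #|B|.
Proof. by move=> /disjoint_setI0 AB0; rewrite cardsU AB0 cards0 subn0. Qed.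

Lemma card_setIU1 (T : finType) (C A : {set T}) u :
  u \in C -> #|C :&: (u |: A)| = (u \notin A) + #|C :&: A|.
Proof. by move=> uC; rewrite setIUr (setIidPr _) ?sub1set // cardsU1 inE uC. Qed.

Lemma leq_sum_drop2 (I : finType) (P : pred I) (F G : I -> nat) i j :
  i != j -> P i -> P j -> (forall k, P k -> F k <= G k) -> F i < G i -> F j < G j ->
  \sum_(k | P k) F k + 2 <= \sum_(k | P k) G k.
Proof.
move=> ij Pi Pj FG lt_i lt_j.
have Pj' : P j && (j != i) by rewrite Pj eq_sym.
rewrite !(bigD1 i Pi) !(bigD1 j Pj') /=.
have : \sum_(k | P k && (k != i) && (k != j)) F k <= \sum_(k | P k && (k != i) && (k != j)) G k.
  by apply: leq_sum => k /andP [/andP [Pk _] _]; apply: FG.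
lia.
Qed.

Definition touching_pairs (T : finType) (N O : {set T}) : {set T * T} :=
  [set p | [&& p.1 \in N :|: O, p.2 \in N :|: O, p.1 != p.2 & (p.1 \in N) || (p.2 \in N)]].

Lemma card_touching_pairs (T : finType) (N O : {set T}) :
  #|touching_pairs N O| <= #|N| * (#|N| + #|O|) - #|N| + #|O| * #|N|.
Proof.
have diag_sub : [set (x, x) | x in N] \subset setX N (N :|: O).
  by apply/subsetP => _ /imsetP [x xN ->]; rewrite !inE /= xN.
have sub : touching_pairs N O \subset (setX N (N :|: O) :\: [set (x, x) | x in N]) :|: setX O N.
  apply/subsetP => -[x y]; rewrite !inE /= => /and4P [xNO yNO xy xyN].
  have -> : (x, y) \notin [set (z, z) | z in N] by apply: contra xy => /imsetP [z _ [-> ->]].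
  by case: (x \in N) xNO xyN => /= [_ _|xO yN]; rewrite ?yNO ?xO ?yN ?orbT.
apply: leq_trans (subset_leq_card sub) _; apply: leq_trans (leq_card_setU _ _) _.
rewrite cardsDS // !cardsX card_imset; last by move=> z z' [].
by rewrite leq_add2r leq_sub2r // leq_mul2l leq_card_setU orbT.
Qed.

Lemma final_set_nil (V : finType) (A : {set V}) : final_set A [::] = A.
Proof. by apply/setP => x; rewrite !inE orbF. Qed.

Lemma final_set_cons (V : finType) (A : {set V}) u s :
  final_set A (u :: s) = final_set (u |: A) s.
Proof. by apply/setP => x; rewrite !inE; case: (x == u); case: (x \in A). Qed.

(* A copy with c new and h old vertices, n resp. e of them infected. *)
Lemma copy_count_arith r n e c h : 5 <= r -> c + h = r -> h <= 2 -> n <= c -> e <= h ->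
  n * (n + e) - n + e * n + 2 * (0 < n) <= (r + 1) * n + 2 * ((n == c) && (e == h)).
Proof.
move=> r5 chr h2 nc eh; case: (boolP ((n == c) && (e == h))) => [|not_full]; first nia.
by case: n nc not_full => [|n] nc; rewrite ?negb_and; nia.
Qed.

(* The charges left on a copy with c infected vertices: one until it has two
   infected vertices, one until it has r - 3; for r = 5 they are the same. *)
Definition weight (r c : nat) : nat := (c <= 1) + ((c <= r - 4) && (r != 5)).

Lemma leq_weight r c c' : c <= c' -> weight r c' <= weight r c.
Proof. rewrite /weight; lia. Qed.

Lemma weight_drop r c : 5 <= r -> c = 1 \/ c = r - 4 -> weight r c.+1 < weight r c.
Proof. rewrite /weight; lia. Qed.

Lemma weight_le r c : weight r c <= 1 + (r != 5).
Proof. rewrite /weight; lia. Qed.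

Lemma step_arith m k a a' f f' p p' : a + 2 * k <= a' -> f' <= f + (k - m) ->
  m <= k.+1 /\ p' + 2 * (k < m) <= p -> a + 2 * f' + p' + 2 * m <= a' + 2 * f + p.
Proof. lia. Qed.

Lemma chain_arith a b c f g h p q t x y :
  a + 2 * g + q + x <= b + 2 * f + p -> b + 2 * h + t + y <= c + 2 * g + q ->
  a + 2 * h + t + (x + y) <= c + 2 * f + p.
Proof. lia. Qed.

Lemma final_count_arith (r S L N E E0 F Fs P P0 : nat) : 5 <= r ->
  E0 + 2 * F + P0 + 2 * (r - 2) * L <= E + 2 * Fs + P ->
  E + 2 * N <= (r + 1) * (S + L) + 2 * F ->
  S + L <= r * N -> Fs <= S -> P <= (1 + (r != 5)) * N ->
  S + L <= 8 * r * S.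
Proof.
move=> r5 hpot hE hN hFs hP.
have [r_eq5 | r_ne5] := eqVneq r 5.
  by subst r; rewrite /= in hP; lia.
rewrite r_ne5 in hP.
have hL : (r - 5) * L <= (r + 3) * S by nia.
have : L <= (r + 3) * S by apply: leq_trans hL; apply: leq_pmull; lia.
nia.
Qed.

Section KrTree.
Variables (r : nat) (V : finType) (Hs : seq {set V}).

Definition new_vertices i : {set V} := copy Hs i :\: prefix_vertices Hs i.

Definition nbrs (A : {set V}) (u : V) : {set V} := [set w in A | tadj Hs w u].

Definition adj_pairs (X : {set V}) : {set V * V} :=
  [set p | [&& p.1 \in X, p.2 \in X & tadj Hs p.1 p.2]].

Definition touched_copies (X : {set V}) : nat :=
  \sum_(i < size Hs) (new_vertices i :&: X != set0).

Definition full_copies (X : {set V}) : nat :=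
  \sum_(i < size Hs) (copy Hs i \subset X).

Lemma prefix_vertices0 : prefix_vertices Hs 0 = set0.
Proof. by rewrite /prefix_vertices big_ord0. Qed.

Lemma prefix_verticesS i :
  prefix_vertices Hs i.+1 = prefix_vertices Hs i :|: copy Hs i.
Proof. by rewrite /prefix_vertices big_ord_recr. Qed.

Lemma copy_sub_prefix i j : i < j -> copy Hs i \subset prefix_vertices Hs j.
Proof. by move=> lt_ij; apply: (bigcup_sup (Ordinal lt_ij)). Qed.

Lemma tree_vertices_prefix : tree_vertices Hs = prefix_vertices Hs (size Hs).
Proof. by rewrite /tree_vertices (big_nth set0) big_mkord. Qed.

Lemma tadjP x y :
  reflect (x != y /\ exists2 i, i < size Hs & (x \in copy Hs i) && (y \in copy Hs i))
          (tadj Hs x y).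
Proof.
apply: (iffP andP) => [[xy /hasP [H HHs xyH]] | [xy [i lt_i xyi]]]; split => //.
  by exists (index H Hs); rewrite ?index_mem // /copy nth_index.
by apply/hasP; exists (copy Hs i); rewrite // /copy mem_nth.
Qed.

Lemma tadj_sym x y : tadj Hs x y = tadj Hs y x.
Proof. by rewrite /tadj eq_sym; congr (_ && _); apply: eq_in_has => H _; apply: andbC. Qed.

Lemma tadj_copy i x y :
  i < size Hs -> x \in copy Hs i -> y \in copy Hs i -> x != y -> tadj Hs x y.
Proof. by move=> lt_i xi yi xy; apply/tadjP; split => //; exists i; rewrite ?xi. Qed.

Lemma card_prefix_vertices (X : {set V}) n :
  #|X :&: prefix_vertices Hs n| = \sum_(i < n) #|new_vertices i :&: X|.
Proof.
elim: n => [|n IHn]; first by rewrite prefix_vertices0 setI0 cards0 big_ord0.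
rewrite big_ord_recr /= -IHn -(cardsID (prefix_vertices Hs n)) prefix_verticesS.
congr (_ + _); apply: eq_card => x; rewrite !inE;
  by case: (x \in prefix_vertices Hs n); case: (x \in X); case: (x \in copy Hs n).
Qed.

Lemma new_vertices_disjoint i j x :
  i < j -> x \in new_vertices i -> x \notin new_vertices j.
Proof.
move=> lt_ij /setDP [xi _]; apply/negP => /setDP [_ /negP []].
exact: subsetP (copy_sub_prefix lt_ij) x xi.
Qed.

Hypothesis hT : is_Kr_tree r Hs.
Hypothesis hr : 5 <= r.

Lemma card_copy i : i < size Hs -> #|copy Hs i| = r.
Proof. by case: hT => h _; apply: h. Qed.

Lemma copy_attach i : 0 < i < size Hs ->
  exists2 j, j < i & copy Hs i :&: prefix_vertices Hs i \subset copy Hs j.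
Proof.
move=> /(hT.2 i) [a [b [_ -> [j lt_ji /andP [aj bj]]]]].
by exists j => //; apply/subsetP => x; rewrite !inE => /orP [] /eqP ->.
Qed.

Lemma card_copy_prefix i : i < size Hs -> #|copy Hs i :&: prefix_vertices Hs i| <= 2.
Proof.
case: i => [|i] lt_i; first by rewrite prefix_vertices0 setI0 cards0.
have [a [b [_ -> _]]] := hT.2 i.+1 lt_i.
by rewrite cards2; case: (a != b).
Qed.

Lemma card_new_vertices i :
  i < size Hs -> #|new_vertices i| + #|copy Hs i :&: prefix_vertices Hs i| = r.
Proof. by move=> lt_i; rewrite addnC cardsID card_copy. Qed.

Lemma new_vertices_gt0 i : i < size Hs -> 0 < #|new_vertices i|.
Proof. by move=> lt_i; have := card_new_vertices lt_i; have := card_copy_prefix lt_i; lia. Qed.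

Lemma card_copyI i j :
  i < size Hs -> j < size Hs -> i != j -> #|copy Hs i :&: copy Hs j| <= 2.
Proof.
wlog lt_ij : i j / i < j => [wlog_ij lt_i lt_j|_ lt_j _].
  rewrite neq_ltn => /orP [] lt; first by rewrite wlog_ij // neq_ltn lt.
  by rewrite setIC wlog_ij // neq_ltn lt ?orbT.
apply: leq_trans (card_copy_prefix lt_j); apply: subset_leq_card.
by rewrite setIC setIS // copy_sub_prefix.
Qed.

Lemma card_copyI_new i (X : {set V}) :
  i < size Hs -> #|copy Hs i :&: X| <= #|new_vertices i :&: X| + 2.
Proof.
move=> lt_i; rewrite -(cardsID (prefix_vertices Hs i)) addnC leq_add //.
  by apply: subset_leq_card; apply/subsetP => x; rewrite !inE => /and3P [-> -> ->].
apply: leq_trans (card_copy_prefix lt_i); apply: subset_leq_card.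
by rewrite setIAC subsetIl.
Qed.

(* In the first copy containing the edge xy, x or y is new: otherwise xy is the
   attaching edge of that copy and lies in an earlier one. *)
Lemma adj_first_copy x y : tadj Hs x y ->
  exists2 i, i < size Hs & [&& x \in copy Hs i, y \in copy Hs i &
                              (x \in new_vertices i) || (y \in new_vertices i)].
Proof.
case/tadjP => _ ex_i.
have ex_i' : exists i, [&& i < size Hs, x \in copy Hs i & y \in copy Hs i].
  by case: ex_i => i lt_i xyi; exists i; rewrite lt_i.
case: (ex_minnP ex_i') => i /and3P [lt_i xi yi] min_i.
exists i; rewrite // xi yi !inE xi yi !andbT -negb_and; apply/negP => /andP [xP yP].
have i_gt0 : 0 < i by rewrite lt0n; apply: contraTneq xP => ->; rewrite prefix_vertices0 inE.
have /copy_attach [j lt_ji sub_j] : 0 < i < size Hs by rewrite i_gt0.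
have := min_i j; rewrite (leq_trans lt_ji (ltnW lt_i)).
rewrite (subsetP sub_j x) ?(subsetP sub_j y) ?inE ?xi ?yi ?xP ?yP // => /(_ isT).
by rewrite leqNgt lt_ji.
Qed.

Definition copy_pairs i (X : {set V}) : {set V * V} :=
  touching_pairs (new_vertices i :&: X) (copy Hs i :&: prefix_vertices Hs i :&: X).

Lemma adj_pairs_sub (X : {set V}) :
  adj_pairs X \subset \bigcup_(i < size Hs) copy_pairs (val i) X.
Proof.
apply/subsetP => -[x y]; rewrite inE /= => /and3P [xX yX xy].
have [i lt_i /and3P [xi yi new_xy]] := adj_first_copy xy.
apply/bigcupP; exists (Ordinal lt_i) => //; rewrite inE /=.
have -> : new_vertices i :&: X :|: copy Hs i :&: prefix_vertices Hs i :&: X = copy Hs i :&: X.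
  apply/setP => z; rewrite !inE.
  by case: (z \in prefix_vertices Hs i); case: (z \in copy Hs i); case: (z \in X).
by case/andP: xy => xy _; rewrite !in_setI xX yX xi yi xy !andbT.
Qed.

Lemma copy_full i (X : {set V}) : (copy Hs i \subset X) =
  (#|new_vertices i :&: X| == #|new_vertices i|) &&
  (#|copy Hs i :&: prefix_vertices Hs i :&: X| == #|copy Hs i :&: prefix_vertices Hs i|).
Proof.
by rewrite -{1}(setID (copy Hs i) (prefix_vertices Hs i)) subUset andbC !subset_cardsI.
Qed.

Lemma adj_pairs_bound (X : {set V}) :
  #|adj_pairs X| + 2 * touched_copies X <=
  (r + 1) * #|X :&: tree_vertices Hs| + 2 * full_copies X.
Proof.
rewrite tree_vertices_prefix card_prefix_vertices /touched_copies /full_copies !big_distrr /=.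
have pairs_le := leq_trans (subset_leq_card (adj_pairs_sub X)) (card_bigcup_le _ _).
apply: leq_trans (leq_add pairs_le (leqnn _)) _.
rewrite -!big_split /=; apply: leq_sum => -[i lt_i] _ /=.
apply: leq_trans (leq_add (card_touching_pairs _ _) (leqnn _)) _.
rewrite -card_gt0 copy_full.
apply: copy_count_arith; rewrite ?(card_new_vertices lt_i) ?(card_copy_prefix lt_i) //.
  by apply: subset_leq_card; apply: subsetIl.
by apply: subset_leq_card; apply: subsetIl.
Qed.

Lemma card_le_touched (X : {set V}) : #|X :&: tree_vertices Hs| <= r * touched_copies X.
Proof.
rewrite tree_vertices_prefix card_prefix_vertices big_distrr; apply: leq_sum => -[i lt_i] _ /=.
rewrite -card_gt0; have := card_new_vertices lt_i.
have : #|new_vertices i :&: X| <= #|new_vertices i| by apply: subset_leq_card; apply: subsetIl.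
by case: (posnP #|new_vertices i :&: X|) => [-> //|]; lia.
Qed.

Lemma full_copies_le (X : {set V}) : full_copies X <= #|X :&: tree_vertices Hs|.
Proof.
rewrite tree_vertices_prefix card_prefix_vertices; apply: leq_sum => -[i lt_i] _ /=.
rewrite copy_full; case: eqP => [->|//] /=.
by case: (_ == _) => //; apply: new_vertices_gt0.
Qed.

Lemma adj_pairs_setU1 (A : {set V}) u : u \notin A ->
  #|adj_pairs A| + 2 * #|nbrs A u| <= #|adj_pairs (u |: A)|.
Proof.
move=> uA; set L := [set (w, u) | w in nbrs A u]; set R := [set (u, w) | w in nbrs A u].
have wA w : w \in nbrs A u -> w \in A by rewrite inE => /andP [].
have disj_LR : [disjoint L & R].
  rewrite -setI_eq0; apply/eqP/setP => p; rewrite !inE.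
  by apply/negP => /andP [/imsetP [w /wA wA' ->] /imsetP [w' _ [eq_wu _]]]; rewrite -eq_wu wA' in uA.
have disj_A : [disjoint adj_pairs A & L :|: R].
  rewrite -setI_eq0; apply/eqP/setP => p; rewrite !inE.
  apply/negP => /andP [/and3P [p1A p2A _] /orP [] /imsetP [w _ eq_p]];
    by move: p1A p2A; rewrite eq_p /= (negbTE uA) ?andbF.
have sub : adj_pairs A :|: (L :|: R) \subset adj_pairs (u |: A).
  apply/subsetP => p; rewrite !inE => /orP [/and3P [-> -> ->]|]; rewrite ?orbT //.
  case/orP => /imsetP [w wN ->]; have := wN; rewrite inE => /andP [wA' adj_wu];
    by rewrite /= wA' eqxx ?orbT //= tadj_sym.
apply: leq_trans (subset_leq_card sub); rewrite !cardsU_disjoint //.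
have inj_l : injective (fun w : V => (w, u)) by move=> w w' [].
have inj_r : injective (pair u : V -> V * V) by move=> w w' [].
by rewrite !card_imset // addnn -mul2n.
Qed.

Lemma completed_copy i (A : {set V}) u : i < size Hs -> u \notin A ->
  copy Hs i \subset u |: A -> ~~ (copy Hs i \subset A) ->
  u \in copy Hs i /\ copy Hs i :\ u \subset nbrs A u.
Proof.
move=> lt_i uA sub_uA not_sub.
have ui : u \in copy Hs i.
  apply: contraNT not_sub => not_ui; apply/subsetP => x xi.
  by have := subsetP sub_uA x xi; rewrite in_setU1 => /orP [/eqP eq_xu|//]; rewrite -eq_xu xi in not_ui.
split => //; apply/subsetP => x; rewrite !inE => /andP [xu xi].
have := subsetP sub_uA x xi; rewrite in_setU1 (negbTE xu) /= => ->.
exact: tadj_copy lt_i xi ui xu.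
Qed.

Definition completed_copies (A : {set V}) (u : V) : {set 'I_(size Hs)} :=
  [set i : 'I_(size Hs) | (copy Hs i \subset u |: A) && ~~ (copy Hs i \subset A)].

Lemma full_copies_setU1_le (A : {set V}) u :
  full_copies (u |: A) <= full_copies A + #|completed_copies A u|.
Proof.
rewrite /full_copies -sum1_card [X in _ + X]big_mkcond -big_split /=; apply: leq_sum => i _.
by rewrite inE; case: (copy Hs i \subset u |: A); case: (copy Hs i \subset A).
Qed.

(* The earliest completed copy provides r - 1 infected neighbours of u, and
   each later one a new vertex of its own. *)
Lemma card_completed_copies (A : {set V}) u : u \notin A -> completed_copies A u != set0 ->
  #|completed_copies A u| + (r - 2) <= #|nbrs A u|.
Proof.
move=> uA /set0Pn [i1 i1T]; set T := completed_copies A u.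
have [i0 i0T min_i0] : exists2 i0 : 'I_(size Hs), i0 \in T & forall i, i \in T -> i0 <= i.
  by case: (arg_minnP (fun i : 'I_(size Hs) => val i) i1T) => i0; exists i0.
have completed i : i \in T -> u \in copy Hs i /\ copy Hs i :\ u \subset nbrs A u.
  by rewrite inE => /andP [sub not_sub]; apply: completed_copy.
have [u_i0 sub_i0] := completed i0 i0T.
pose f (i : 'I_(size Hs)) := odflt u [pick v in new_vertices i].
have f_new (i : 'I_(size Hs)) : f i \in new_vertices i.
  rewrite /f; case: pickP => [v //|none].
  by have /card_gt0P [v] := new_vertices_gt0 (ltn_ord i); rewrite none.
have i0_lt i : i \in T :\ i0 -> val i0 < val i.
  by rewrite in_setD1 ltn_neqAle val_eqE eq_sym => /andP [-> /min_i0].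
have f_nbrs : f @: (T :\ i0) \subset nbrs A u :\: copy Hs i0.
  apply/subsetP => _ /imsetP [i iT ->].
  have [ui sub_i] := completed i (subsetP (subsetDl _ _) i iT).
  have /setDP [fi f_prefix] := f_new i.
  have i0_prefix := copy_sub_prefix (i0_lt i iT).
  have fu : f i != u by apply: contraNneq f_prefix => ->; apply: subsetP i0_prefix u u_i0.
  rewrite inE (subsetP sub_i) ?inE ?fu ?fi // andbT.
  by apply: contra f_prefix; apply: subsetP.
have f_inj : {in T :\ i0 &, injective f}.
  move=> i j _ _ fij; apply: val_inj; case: (ltngtP (val i) (val j)) => // lt.
    by have := new_vertices_disjoint lt (f_new i); rewrite fij f_new.
  by have := new_vertices_disjoint lt (f_new j); rewrite -fij f_new.
have card_i0 : r - 1 <= #|nbrs A u :&: copy Hs i0|.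
  have := cardsD1 u (copy Hs i0); rewrite u_i0 card_copy // => card_i0u.
  have : copy Hs i0 :\ u \subset nbrs A u :&: copy Hs i0 by rewrite subsetI sub_i0 subsetDl.
  by move/subset_leq_card; lia.
have card_T : #|T| <= #|nbrs A u :\: copy Hs i0| + 1.
  by rewrite (cardsD1 i0 T) i0T addn1 ltnS -(card_in_imset f_inj) subset_leq_card.
by rewrite -(cardsID (copy Hs i0) (nbrs A u)); lia.
Qed.

(* By truncated subtraction, no copy is completed when u has fewer than r - 2
   infected neighbours. *)
Lemma full_copies_setU1 (A : {set V}) u : u \notin A ->
  full_copies (u |: A) <= full_copies A + (#|nbrs A u| - (r - 2)).
Proof.
move=> uA; apply: leq_trans (full_copies_setU1_le A u) _.
have [-> | T0] := eqVneq (completed_copies A u) set0; first by rewrite cards0 leq_add2l.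
by have := card_completed_copies uA T0; lia.
Qed.

Lemma usual_okE (A : {set V}) u :
  usual_ok r Hs A u = (u \notin A) && (r - 2 <= #|nbrs A u|).
Proof. by []. Qed.

Lemma nbrsS (A B : {set V}) z : A \subset B -> nbrs A z \subset nbrs B z.
Proof. by move=> AB; apply/subsetP => w; rewrite !inE => /andP [/(subsetP AB) -> ->]. Qed.

Section SpecialEdge.
Local Set Default Proof Using "All".
Variables (A : {set V}) (i j : nat) (a b : V).
Hypotheses (lt_i : i < size Hs) (lt_j : j < size Hs) (ij : i != j) (ab : a != b).
Hypothesis ab_ij : [&& a \in copy Hs i, b \in copy Hs i, a \in copy Hs j & b \in copy Hs j].
Hypothesis ab_fresh : [disjoint (copy Hs i :|: copy Hs j) :&: A & [set a; b]].

Lemma special_edge_copies z : z \in [set a; b] -> (z \in copy Hs i) && (z \in copy Hs j).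
Proof. by case/and4P: ab_ij => ai bi aj bj; rewrite !inE => /orP [] /eqP ->; apply/andP. Qed.

Lemma special_edge_fresh z : z \in [set a; b] -> z \notin A.
Proof.
move=> zab; have /andP [zi _] := special_edge_copies zab.
by have := disjointFl ab_fresh zab; rewrite !inE zi => /negbT.
Qed.

Lemma card_special_nbrs z : z \in [set a; b] ->
  #|copy Hs i :&: A| + #|copy Hs j :&: A| <= #|nbrs A z|.
Proof.
move=> zab; have /andP [zi zj] := special_edge_copies zab.
have zA := special_edge_fresh zab.
have meet_ij : copy Hs i :&: copy Hs j \subset [set a; b].
  have sub_ab : [set a; b] \subset copy Hs i :&: copy Hs j.
    by apply/subsetP => x /special_edge_copies; rewrite inE.
  by rewrite -(subset_leqif_card sub_ab).2 eqn_leq subset_leq_card // cards2 ab card_copyI.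
have disj_ij : [disjoint copy Hs i :&: A & copy Hs j :&: A].
  rewrite disjoint_subset; apply/subsetP => x /setIP [xi xA]; rewrite inE; apply/negP => /setIP [xj _].
  have /(subsetP meet_ij) xab : x \in copy Hs i :&: copy Hs j by rewrite inE xi.
  by rewrite (negbTE (special_edge_fresh xab)) in xA.
rewrite -cardsU_disjoint //; apply: subset_leq_card; apply/subsetP => x.
rewrite !inE -andb_orl => /andP [xij xA]; rewrite xA.
have xz : x != z by apply: contraNneq zA => <-.
by case/orP: xij => [xi|xj]; [apply: tadj_copy lt_i xi zi xz | apply: tadj_copy lt_j xj zj xz].
Qed.

Lemma special_edge_infected (Af : {set V}) u : terminated r Hs Af -> u |: A \subset Af ->
  u \in [set a; b] -> r - 3 <= #|copy Hs i :&: A| + #|copy Hs j :&: A| ->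
  [set a; b] :|: A \subset Af.
Proof.
move=> [no_usual _] uA_Af uab card_ij.
have A_Af : A \subset Af by apply: subset_trans uA_Af; apply: subsetUr.
have u_Af : u \in Af by apply: (subsetP uA_Af); apply: setU11.
rewrite subUset A_Af andbT; apply/subsetP => z zab.
have [-> // | zu] := eqVneq z u.
apply: contraTT (no_usual z) => zAf; rewrite negbK usual_okE zAf /=.
have /andP [zi _] := special_edge_copies zab.
have /andP [ui _] := special_edge_copies uab.
have : u |: nbrs A z \subset nbrs Af z.
  by rewrite subUset sub1set inE u_Af (tadj_copy lt_i ui zi) 1?eq_sym // nbrsS.
move/subset_leq_card => le_Af; apply: leq_trans le_Af.
rewrite cardsU1 inE (negbTE (special_edge_fresh uab)) add1n.
have := leq_trans card_ij (card_special_nbrs zab).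
by rewrite !leq_subLR addnS.
Qed.

Lemma special_edge_touched (Af : {set V}) k : k < size Hs -> (a \in copy Hs k) && (b \in copy Hs k) ->
  [set a; b] :|: A \subset Af -> copy Hs k :&: A != set0 -> new_vertices k :&: Af != set0.
Proof.
move=> lt_k /andP [ak bk] abA_Af /set0Pn [x /setIP [xk xA]].
have xab : x \notin [set a; b] by apply: contraL xA; apply: special_edge_fresh.
have : x |: [set a; b] \subset copy Hs k :&: Af.
  apply/subsetP => z; rewrite in_setU1 => /orP [/eqP -> | zab]; rewrite inE.
    by rewrite xk (subsetP abA_Af) // inE xA orbT.
  have zk : z \in copy Hs k by move: zab; rewrite !inE => /orP [] /eqP ->.
  by rewrite zk (subsetP abA_Af) // inE zab.
move/subset_leq_card; rewrite cardsU1 xab cards2 ab -card_gt0.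
by have := card_copyI_new Af lt_k; lia.
Qed.

End SpecialEdge.

Lemma special_fresh (A : {set V}) u : special_ok r Hs A u -> u \notin A.
Proof.
case=> i [j [a [b [lt_i lt_j ij ab [ab_ij uab _ _ ab_fresh]]]]].
exact: (special_edge_fresh lt_i lt_j ij ab ab_ij ab_fresh uab).
Qed.

Lemma special_vertex (A : {set V}) u : special_ok r Hs A u -> u \in tree_vertices Hs.
Proof.
case=> i [j [a [b [lt_i lt_j ij ab [ab_ij uab _ _ ab_fresh]]]]].
rewrite tree_vertices_prefix; apply: (subsetP (copy_sub_prefix lt_i)).
by have /andP [] := special_edge_copies lt_i lt_j ij ab ab_ij ab_fresh uab.
Qed.

Lemma special_nbrs (A : {set V}) u : special_ok r Hs A u -> r - 3 <= #|nbrs A u|.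
Proof.
case=> i [j [a [b [lt_i lt_j ij ab [ab_ij uab card_i card_j ab_fresh]]]]].
by have := card_special_nbrs lt_i lt_j ij ab ab_ij ab_fresh uab; rewrite card_i card_j; lia.
Qed.

(* Only copies touched by the final set Af carry charges; termination puts both
   copies of every special step among them. *)
Definition potential (Af A : {set V}) : nat :=
  \sum_(i < size Hs | new_vertices i :&: Af != set0) weight r #|copy Hs i :&: A|.

Lemma leq_potential (Af A B : {set V}) : A \subset B -> potential Af B <= potential Af A.
Proof. by move=> AB; apply: leq_sum => i _; apply/leq_weight/subset_leq_card/setIS. Qed.

Lemma potential_le (Af A : {set V}) : potential Af A <= (1 + (r != 5)) * touched_copies Af.
Proof.
rewrite /potential /touched_copies big_distrr big_mkcond /=; apply: leq_sum => i _.
by case: ifP => _; rewrite ?muln1 ?muln0 ?weight_le.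
Qed.

Lemma special_potential (Af A : {set V}) u : terminated r Hs Af -> u |: A \subset Af ->
  special_ok r Hs A u -> potential Af (u |: A) + 2 <= potential Af A.
Proof.
move=> term uA_Af sp; have uA := special_fresh sp.
case: sp => i [j [a [b [lt_i lt_j ij ab [ab_ij uab card_i card_j ab_fresh]]]]].
have card_ij : r - 3 <= #|copy Hs i :&: A| + #|copy Hs j :&: A|.
  by rewrite card_i card_j addn1 -subSn // ltnW.
have abA_Af := special_edge_infected lt_i lt_j ij ab ab_ij ab_fresh term uA_Af uab card_ij.
have touched k : k < size Hs -> (a \in copy Hs k) && (b \in copy Hs k) ->
    0 < #|copy Hs k :&: A| -> new_vertices k :&: Af != set0.
  by move=> lt_k abk; rewrite card_gt0; apply: (special_edge_touched lt_i lt_j ij ab ab_ij ab_fresh).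
have /and4P [ai bi aj bj] := ab_ij.
have /andP [ui uj] := special_edge_copies lt_i lt_j ij ab ab_ij ab_fresh uab.
apply: (@leq_sum_drop2 _ _ _ _ (Ordinal lt_i) (Ordinal lt_j)) => /=.
- by rewrite -val_eqE.
- by rewrite touched ?ai ?card_i ?subn_gt0.
- by rewrite touched ?aj ?card_j.
- by move=> k _; apply/leq_weight/subset_leq_card/setIS/subsetUr.
- by rewrite card_setIU1 // uA card_i weight_drop //; right.
- by rewrite card_setIU1 // uA card_j weight_drop //; left.
Qed.

Lemma bp_step_fresh (A : {set V}) u : bp_step r Hs A u -> u \notin A.
Proof. by case=> [/andP [] // | [_ /special_fresh]]. Qed.

Lemma bp_step_vertex (A : {set V}) u : bp_step r Hs A u -> u \in tree_vertices Hs.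
Proof.
case=> [| [_ /special_vertex //]]; rewrite usual_okE => /andP [_ le_nbrs].
have /card_gt0P [w] : 0 < #|nbrs A u| by apply: leq_trans le_nbrs; rewrite subn_gt0 (leq_trans _ hr).
rewrite inE => /andP [_ /tadjP [_ [i lt_i /andP [_ ui]]]].
by rewrite tree_vertices_prefix (subsetP (copy_sub_prefix lt_i)).
Qed.

Lemma bp_step_potential (Af A : {set V}) u : terminated r Hs Af -> u |: A \subset Af ->
  bp_step r Hs A u ->
  #|adj_pairs A| + 2 * full_copies (u |: A) + potential Af (u |: A) + 2 * (r - 2) <=
  #|adj_pairs (u |: A)| + 2 * full_copies A + potential Af A.
Proof.
move=> term uA_Af step; have uA := bp_step_fresh step.
apply: step_arith (adj_pairs_setU1 uA) (full_copies_setU1 uA) _.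
case: step => [usual | [no_usual sp]].
  move: usual; rewrite usual_okE uA /= => le_nbrs.
  by rewrite ltnNge le_nbrs addn0 leqW ?leq_potential ?subsetUr.
have := no_usual u; rewrite usual_okE uA /= -ltnNge => -> /=.
split; last exact: special_potential.
by have := special_nbrs sp; rewrite !leq_subLR addnS.
Qed.

Lemma card_final_set (A : {set V}) s :
  valid_run r Hs A s -> #|final_set A s| = #|A| + size s.
Proof.
elim: s A => [|u s IHs] A /=; first by rewrite final_set_nil addn0.
by case=> step run; rewrite final_set_cons IHs // cardsU1 (bp_step_fresh step) add1n addSnnS.
Qed.

Lemma final_set_sub (A : {set V}) s : valid_run r Hs A s ->
  A \subset tree_vertices Hs -> final_set A s \subset tree_vertices Hs.
Proof.
elim: s A => [|u s IHs] A /=; first by rewrite final_set_nil.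
by case=> step run AV; rewrite final_set_cons IHs // subUset sub1set (bp_step_vertex step) AV.
Qed.

Lemma run_potential (Af A : {set V}) s : terminated r Hs Af -> valid_run r Hs A s ->
  final_set A s \subset Af ->
  #|adj_pairs A| + 2 * full_copies (final_set A s) + potential Af (final_set A s) +
    2 * (r - 2) * size s <=
  #|adj_pairs (final_set A s)| + 2 * full_copies A + potential Af A.
Proof.
move=> term; elim: s A => [|u s IHs] A /=; first by rewrite final_set_nil muln0 addn0.
case=> step run; rewrite final_set_cons => sub.
have uA_Af : u |: A \subset Af by apply: subset_trans sub; apply: subsetUl.
rewrite mulnS; exact: chain_arith (bp_step_potential term uA_Af step) (IHs _ run sub).
Qed.

End KrTree.

Theorem lemma6p5 (r : nat) (hr : 5 <= r) :
  exists C : nat,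
    forall (V : finType) (Hs : seq {set V}), is_Kr_tree r Hs ->
    forall (S : {set V}), S \subset tree_vertices Hs ->
    forall run : seq V,
      valid_run r Hs S run ->
      terminated r Hs (final_set S run) ->
      #|final_set S run| <= C * #|S|.
Proof.
exists (8 * r) => V Hs hT S SV run valid term.
have AfV := final_set_sub hT hr valid SV.
have pot := run_potential hT hr term valid (subxx _).
have pairs := adj_pairs_bound hT hr (final_set S run).
have card_Af := card_le_touched hT hr (final_set S run).
rewrite (setIidPl AfV) in pairs card_Af.
have full_S : full_copies Hs S <= #|S|.
  exact: leq_trans (full_copies_le hT hr S) (subset_leq_card (subsetIl _ _)).
rewrite (card_final_set hT hr valid) in pairs card_Af *.
exact: final_count_arith hr pot pairs card_Af full_S (potential_le _ _ _ S).
Qed.
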